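(* Let $\mathbf{y}\in\mathbb{R}^n$ and $\mathbf{X}=(\mathbf{x}_1,\ldots,\mathbf{x}_p)\in\mathbb{R}^{n\times p}$ satisfy $\sum_{i=1}^n y_i=0$, and for every $j$, $\sum_{i=1}^n x_{ij}=0$ and $\frac1n\sum_{i=1}^n x_{ij}^2=1$. Let $\alpha\in(0,1]$ and for $\lambda>0$ let $$\widehat{\boldsymbol\beta}(\lambda,\alpha)=\operatorname*{argmin}_{\boldsymbol\beta\in\mathbb{R}^p}\ \frac{1}{2n}\|\mathbf{y}-\mathbf{X}\boldsymbol\beta\|^2+\alpha\lambda\|\boldsymbol\beta\|_1+\frac{(1-\alpha)\lambda}{2}\|\boldsymbol\beta\|^2 .$$ Let $\lambda_m=\max_j\left|\frac{\mathbf{x}_j^T\mathbf{y}}{\alpha n}\right|$ and $\mathbf{x}_*=\operatorname*{argmax}_{\mathbf{x}_j}|\mathbf{x}_j^T\mathbf{y}|$. Then for any $\lambda\in(0,\lambda_m]$ and any $\mathbf{x}_j\neq\mathbf{x}_*$, we have $\widehat{\beta}_j(\lambda,\alpha)=0$ if $$\left|(\lambda_m+\lambda)\mathbf{x}_j^T\mathbf{y}-(\lambda_m-\lambda)\frac{\mathrm{sign}(\mathbf{x}_*^T\mathbf{y})\,\alpha\lambda_m}{1+\lambda(1-\alpha)}\mathbf{x}_j^T\mathbf{x}_*\right|<2n\alpha\lambda\lambda_m-(\lambda_m-\lambda)\sqrt{n\|\mathbf{y}\|^2(1+\lambda(1-\alpha))-n^2\alpha^2\lambda_m^2}.$$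
   Context: $\|\cdot\|$ is the Euclidean norm and $\|\cdot\|_1$ the $\ell_1$ norm; $\widehat{\beta}_j(\lambda,\alpha)$ is the $j$th coordinate of the elastic net solution. *)

From HB Require Import structures.
From mathcomp Require Import all_boot all_order all_algebra.
From mathcomp Require Import reals.
Set Implicit Arguments. Unset Strict Implicit. Unset Printing Implicit Defensive.
Import Order.TTheory GRing.Theory Num.Theory.
Local Open Scope ring_scope.

Section EN.
Variables (R : realType) (n p : nat).

Definition xty (X : 'M[R]_(n, p)) (y : 'I_n -> R) (j : 'I_p) : R :=
  \sum_(i < n) X i j * y i.

Definition xtx (X : 'M[R]_(n, p)) (j k : 'I_p) : R :=
  \sum_(i < n) X i j * X i k.

Definition sqnorm (y : 'I_n -> R) : R := \sum_(i < n) y i ^+ 2.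

Definition enet_obj (X : 'M[R]_(n, p)) (y : 'I_n -> R) (lam alpha : R)
    (b : 'I_p -> R) : R :=
  (2 * n%:R)^-1 * \sum_(i < n) (y i - \sum_(l < p) X i l * b l) ^+ 2
  + alpha * lam * \sum_(l < p) `|b l|
  + (1 - alpha) * lam / 2 * \sum_(l < p) b l ^+ 2.

Definition enet_argmin (X : 'M[R]_(n, p)) (y : 'I_n -> R) (lam alpha : R)
    (b : 'I_p -> R) : Prop :=
  forall b' : 'I_p -> R, enet_obj X y lam alpha b <= enet_obj X y lam alpha b'.

Definition lambda_m (X : 'M[R]_(n, p)) (y : 'I_n -> R) (alpha : R) : R :=
  \big[Num.max/0]_(l < p) `|xty X y l / (alpha * n%:R)|.

End EN.

From HB Require Import structures.
From mathcomp Require Import all_boot all_order all_algebra.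
From mathcomp Require Import reals.
From mathcomp Require Import ring lra.
Set Implicit Arguments.
Unset Strict Implicit.
Unset Printing Implicit Defensive.
Import Order.TTheory GRing.Theory Num.Theory.
Local Open Scope ring_scope.

(* The elastic net with ridge weight [m = n (1 - alpha) lam] is the lasso
   with penalty [mu = n alpha lam] on data augmented by [sqrt m] times the
   identity (Zou--Hastie).  Its dual optimum [theta = r / mu], with [r] the
   augmented residual, is the projection of [Y / mu] onto the polytope
   [{th | forall l, |<x_l, th>| <= 1}], which also contains
   [theta0 = Y / (n alpha lambda_m)] on the face of [x_*].  Hence [theta]
   lies in the ball with diameter [theta0, Y / mu - t sign(x_*^T y) x_*]
   for every [t >= 0] (the EDPP region).  For the [t] minimizing the
   diameter, the hypothesis says precisely that [<x_j, .>] stays in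
   [(-1, 1)] on this ball, so [|<x_j, theta>| < 1] and the KKT conditions
   force [beta_j = 0]. *)

Lemma quadratic_ge0_discriminant (R : realFieldType) (A B C : R) : 0 <= C ->
  (forall t, 0 <= A + 2 * B * t + C * t ^+ 2) -> B ^+ 2 <= A * C.
Proof.
move=> C_ge0 quad_ge0; have [C0|C_gt0] := eqVneq C 0.
  have [B0|B_neq0] := eqVneq B 0; first by rewrite B0 C0; lra.
  have := quad_ge0 (- (A + 1) / (2 * B)); rewrite C0.
  have -> : A + 2 * B * (- (A + 1) / (2 * B)) + 0 * (- (A + 1) / (2 * B)) ^+ 2 = -1
    by field.
  lra.
have {C_gt0}C_gt0 : 0 < C by rewrite lt0r C_gt0.
have := quad_ge0 (- B / C).
have -> : A + 2 * B * (- B / C) + C * (- B / C) ^+ 2 = (A * C - B ^+ 2) / C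
  by field; rewrite gt_eqF.
by rewrite pmulr_lge0 ?invr_gt0 // subr_ge0.
Qed.

Lemma quadratic_slope_ge0 (R : realFieldType) (A K : R) : 0 <= K ->
  (forall s, 0 < s -> s <= 1 -> 0 <= A * s + K * s ^+ 2) -> 0 <= A.
Proof.
move=> K_ge0 quad_ge0; rewrite leNgt; apply/negP => A_lt0.
pose s := - A / (K - A).
have KA_gt0 : 0 < K - A by lra.
have s_gt0 : 0 < s by rewrite divr_gt0 ?oppr_gt0.
have s_le1 : s <= 1 by rewrite ler_pdivrMr ?mul1r; lra.
have := quad_ge0 s s_gt0 s_le1.
have -> : A * s + K * s ^+ 2 = - (s * (A ^+ 2 / (K - A)))
  by rewrite /s; field; rewrite gt_eqF.
have : 0 < s * (A ^+ 2 / (K - A)) by apply: mulr_gt0 s_gt0 (divr_gt0 _ KA_gt0); nra.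
lra.
Qed.

(* The conclusion says that [g] lies in [a] times the subdifferential of
   [|.|] at [b]. *)
Lemma abs_subgradient (R : realFieldType) (a b g K : R) : 0 <= a -> 0 <= K ->
  (forall t, 0 <= a * (`|b + t| - `|b|) - t * g + K * t ^+ 2) ->
  a * `|b| <= b * g /\ `|g| <= a.
Proof.
move=> a_ge0 K_ge0 min0; split.
  rewrite -subr_ge0; apply: (quadratic_slope_ge0 (mulr_ge0 K_ge0 (sqr_ge0 b))).
  move=> s s_gt0 s_le1; have := min0 (- (s * b)).
  have -> : b + - (s * b) = (1 - s) * b by ring.
  rewrite normrM ger0_norm ?subr_ge0 //.
  by congr (0 <= _); ring.
have slope (e : R) : `|e| = 1 -> 0 <= a - e * g.
  move=> e1; apply: (quadratic_slope_ge0 K_ge0) => s s_gt0 _.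
  have e2 : e ^+ 2 = 1 by rewrite -real_normK ?num_real // e1 expr1n.
  have := min0 (e * s); rewrite exprMn e2 mul1r.
  have : `|b + e * s| - `|b| <= s.
    by have := ler_normD b (e * s); rewrite normrM e1 mul1r gtr0_norm //; lra.
  move=> /(ler_wpM2l a_ge0); lra.
have := slope 1 (normr1 _); have := slope (-1) (normrN1 _).
by rewrite ler_norml; lra.
Qed.

Lemma ler_norm_sqrt (R : rcfType) (u v S : R) :
  0 <= v -> u ^+ 2 <= v ^+ 2 * S -> `|u| <= v * Num.sqrt S.
Proof.
move=> v_ge0 le_uvS; have [S_ge0|S_lt0] := leP 0 S.
  rewrite -ler_sqr ?nnegrE ?mulr_ge0 ?sqrtr_ge0 //.
  by rewrite real_normK ?num_real // exprMn sqr_sqrtr.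
have u2_le0 := le_trans le_uvS (mulr_ge0_le0 (sqr_ge0 v) (ltW S_lt0)).
by rewrite ltr0_sqrtr // mulr0 normr_le0 -sqrf_eq0 eq_le u2_le0 sqr_ge0.
Qed.

Definition vdot (R : pzRingType) N (u v : 'rV[R]_N) : R :=
  \sum_k u 0 k * v 0 k.
Local Notation "''[' u , v ]" := (vdot u v).

Section RowDot.
Variables (R : realFieldType) (N : nat).
Implicit Types (u v z : 'rV[R]_N) (a : R).

Lemma vdotC u v : '[u, v] = '[v, u].
Proof. by apply: eq_bigr => k _; rewrite mulrC. Qed.

Lemma vdotDl u v z : '[u + v, z] = '[u, z] + '[v, z].
Proof. by rewrite -big_split; apply: eq_bigr => k _; rewrite mxE mulrDl. Qed.

Lemma vdotZl a u v : '[a *: u, v] = a * '[u, v].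
Proof. by rewrite mulr_sumr; apply: eq_bigr => k _; rewrite mxE mulrA. Qed.

Lemma vdotNl u v : '[- u, v] = - '[u, v].
Proof. by rewrite -scaleN1r vdotZl mulN1r. Qed.

Lemma vdotBl u v z : '[u - v, z] = '[u, z] - '[v, z].
Proof. by rewrite vdotDl vdotNl. Qed.

Lemma vdotDr u v z : '[z, u + v] = '[z, u] + '[z, v].
Proof. by rewrite vdotC vdotDl !(vdotC z). Qed.

Lemma vdotZr a u v : '[u, a *: v] = a * '[u, v].
Proof. by rewrite vdotC vdotZl vdotC. Qed.

Lemma vdotBr u v z : '[z, u - v] = '[z, u] - '[z, v].
Proof. by rewrite vdotC vdotBl !(vdotC z). Qed.

Lemma vdot_suml (I : Type) (r : seq I) (F : I -> 'rV[R]_N) v :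
  '[\sum_(i <- r) F i, v] = \sum_(i <- r) '[F i, v].
Proof.
rewrite /vdot exchange_big; apply: eq_bigr => k _.
by rewrite summxE mulr_suml.
Qed.

Lemma vdot_ge0 u : 0 <= '[u, u].
Proof. by apply: sumr_ge0 => k _; rewrite -expr2 sqr_ge0. Qed.

Lemma vdot_CauchySchwarz u v : '[u, v] ^+ 2 <= '[u, u] * '[v, v].
Proof.
apply: quadratic_ge0_discriminant (vdot_ge0 v) _ => t.
have := vdot_ge0 (u + t *: v).
rewrite !(vdotDl, vdotDr, vdotZl, vdotZr) (vdotC v u).
by congr (0 <= _); ring.
Qed.

(* The hypothesis says that [d] lies in the ball with diameter [[0, c]]. *)
Lemma vdot_diameter_ball c d z : '[d, d] <= '[c, d] ->
  ('[z, d] - '[z, c] / 2) ^+ 2 <= '[z, z] * '[c, c] / 4.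
Proof.
move=> d_in_ball; set e := d - 2^-1 *: c.
have ee : '[e, e] = '[d, d] - '[c, d] + '[c, c] / 4.
  by rewrite !(vdotBl, vdotBr, vdotZl, vdotZr) (vdotC d c); field.
have ze : '[z, e] = '[z, d] - '[z, c] / 2 by rewrite vdotBr vdotZr mulrC.
rewrite -ze; apply: le_trans (vdot_CauchySchwarz z e) _.
rewrite -mulrA ler_wpM2l ?vdot_ge0 //; lra.
Qed.

Lemma vdot_delta (l l' : 'I_N) :
  '[delta_mx 0 l, delta_mx 0 l'] = (l == l')%:R :> R.
Proof.
rewrite /vdot (bigD1 l) //= big1 => [|k /negbTE k_neq]; last first.
  by rewrite !mxE k_neq mul0r.
by rewrite !mxE !eqxx mul1r addr0 eq_sym.
Qed.

Lemma vdot_row_mx N1 N2 (u1 v1 : 'rV[R]_N1) (u2 v2 : 'rV[R]_N2) :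
  '[row_mx u1 u2, row_mx v1 v2] = '[u1, v1] + '[u2, v2].
Proof.
rewrite /vdot big_split_ord /=.
by congr (_ + _); apply: eq_bigr => k _; rewrite ?row_mxEl ?row_mxEr.
Qed.

End RowDot.

Section Lasso.
Variables (R : realFieldType) (N : nat) (I : finType).
Variables (x : I -> 'rV[R]_N) (Y : 'rV[R]_N) (mu : R).
Implicit Type b : I -> R.

Definition lasso_resid b := Y - \sum_l b l *: x l.

Definition lasso_obj b :=
  '[lasso_resid b, lasso_resid b] / 2 + mu * \sum_l `|b l|.

Definition lasso_argmin b := forall b', lasso_obj b <= lasso_obj b'.

Lemma sum_shift (V : zmodType) (F : I -> R -> V) b l t :
  \sum_k F k (b k + t * (k == l)%:R) =
  \sum_k F k (b k) + (F l (b l + t) - F l (b l)).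
Proof.
rewrite (bigD1 l) //= [in RHS](bigD1 l) //= eqxx mulr1 [RHS]addrC addrA subrK.
by congr (_ + _); apply: eq_bigr => k /negbTE->; rewrite mulr0 addr0.
Qed.

Lemma lasso_resid_shift b l t :
  lasso_resid (fun k => b k + t * (k == l)%:R) = lasso_resid b - t *: x l.
Proof.
rewrite /lasso_resid (sum_shift (fun k c => c *: x k)) scalerDl.
by rewrite [_ *: x l + _]addrC addrK opprD addrA.
Qed.

Lemma lasso_obj_shift b l t :
  lasso_obj (fun k => b k + t * (k == l)%:R) = lasso_obj b
    + (mu * (`|b l + t| - `|b l|) - t * '[x l, lasso_resid b]
       + '[x l, x l] / 2 * t ^+ 2).
Proof.
rewrite /lasso_obj lasso_resid_shift (sum_shift (fun _ c => `|c|)).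
move: (lasso_resid b) => r.
by rewrite !(vdotBl, vdotBr, vdotZl, vdotZr) (vdotC r); field.
Qed.

Lemma lasso_kkt b : 0 <= mu -> lasso_argmin b -> forall l,
  mu * `|b l| <= b l * '[x l, lasso_resid b] /\ `|'[x l, lasso_resid b]| <= mu.
Proof.
move=> mu_ge0 b_min l.
apply: (abs_subgradient mu_ge0 (divr_ge0 (vdot_ge0 (x l)) (ler0n _ 2))) => t.
by have := b_min (fun k => b k + t * (k == l)%:R); rewrite lasso_obj_shift lerDl.
Qed.

Definition lasso_dual b := mu^-1 *: lasso_resid b.

Lemma lasso_dual_kkt b : 0 < mu -> lasso_argmin b -> forall l,
  `|b l| <= b l * '[x l, lasso_dual b] /\ `|'[x l, lasso_dual b]| <= 1.
Proof.
move=> mu_gt0 b_min l; have [kkt1 kkt2] := lasso_kkt (ltW mu_gt0) b_min l.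
rewrite /lasso_dual vdotZr mulrCA normrM gtr0_norm ?invr_gt0 //.
by rewrite ler_pdivlMl // ler_pdivrMl // mulr1.
Qed.

Lemma lasso_screen b l : 0 < mu -> lasso_argmin b ->
  `|'[x l, lasso_dual b]| < 1 -> b l = 0.
Proof.
move=> mu_gt0 b_min lt1; have [kkt1 _] := lasso_dual_kkt mu_gt0 b_min l.
apply/eqP/negPn/negP; rewrite -normr_gt0 => bl_gt0.
have := le_trans kkt1 (ler_norm _); rewrite normrM -{1}[`|b l|]mulr1.
by rewrite ler_pM2l // leNgt lt1.
Qed.

(* [lasso_dual b] is the projection of [mu^-1 *: Y] onto the polytope
   [{th | forall l, |'[x l, th]| <= 1}], which contains [th0]; the
   variational inequality of this projection puts [lasso_dual b] in the ball
   with diameter [[th0, mu^-1 *: Y]], and the half-space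
   ['[v, _] <= '[v, th0]] lets us move the far end of the diameter along
   [- v]. *)
Lemma lasso_dual_ball b th0 v t : 0 < mu -> lasso_argmin b ->
  (forall l, `|'[x l, th0]| <= 1) -> '[v, lasso_dual b] <= '[v, th0] -> 0 <= t ->
  '[lasso_dual b - th0, lasso_dual b - th0]
    <= '[mu^-1 *: Y - th0 - t *: v, lasso_dual b - th0].
Proof.
move=> mu_gt0 b_min th0_feas v_le t_ge0; set d := lasso_dual b - th0.
have -> : mu^-1 *: Y - th0 - t *: v = d + (mu^-1 *: \sum_l b l *: x l - t *: v).
  by apply/rowP => k; rewrite !mxE; ring.
rewrite (vdotDl d) lerDl vdotBl vdotZl (vdotZl t) vdot_suml.
have sum_ge0 : 0 <= \sum_l '[b l *: x l, d].
  apply: sumr_ge0 => l _; have [kkt1 _] := lasso_dual_kkt mu_gt0 b_min l.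
  have := ler_wpM2l (normr_ge0 (b l)) (th0_feas l); rewrite -normrM mulr1.
  by move=> /(le_trans (ler_norm _)) th0_le; rewrite vdotZl vdotBr; lra.
have vd_le0 : '[v, d] <= 0 by rewrite vdotBr subr_le0.
have : 0 <= t * - '[v, d] by rewrite mulr_ge0 // oppr_ge0.
have : 0 <= mu^-1 * \sum_l '[b l *: x l, d] by rewrite mulr_ge0 // invr_ge0 ltW.
lra.
Qed.

End Lasso.

Section Augmentation.
Variables (R : realType) (n p : nat) (X : 'M[R]_(n, p)) (y : 'I_n -> R) (m : R).
Hypothesis m_ge0 : 0 <= m.

(* Zou--Hastie augmentation: stacking [sqrt m] times the identity below [X]
   and zeros below [y] turns the ridge penalty [m |b|^2 / 2] into part of
   the least-squares term. *)
Definition aug_col (l : 'I_p) : 'rV[R]_(n + p) :=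
  row_mx (col l X)^T (Num.sqrt m *: delta_mx 0 l).

Definition aug_y : 'rV[R]_(n + p) := row_mx (\row_i y i) 0.

Lemma vdot_aug_col l l' :
  '[aug_col l, aug_col l'] = xtx X l l' + m * (l == l')%:R.
Proof.
rewrite vdot_row_mx vdotZl vdotZr mulrA -expr2 sqr_sqrtr // vdot_delta.
by congr (_ + _); apply: eq_bigr => i _; rewrite !mxE.
Qed.

Lemma vdot_aug_col_y l : '[aug_col l, aug_y] = xty X y l.
Proof.
rewrite vdot_row_mx vdotZl [Z in _ * Z]big1 ?mulr0 ?addr0 => [|k _]; last first.
  by rewrite !mxE mulr0.
by apply: eq_bigr => i _; rewrite !mxE.
Qed.

Lemma vdot_aug_y : '[aug_y, aug_y] = sqnorm y.
Proof.
rewrite vdot_row_mx [Z in _ + Z]big1 ?addr0 => [|k _]; last by rewrite !mxE mul0r.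
by apply: eq_bigr => i _; rewrite !mxE expr2.
Qed.

Lemma aug_colEl l i : aug_col l 0 (lshift p i) = X i l.
Proof. by rewrite row_mxEl !mxE. Qed.

Lemma aug_colEr l k : aug_col l 0 (rshift n k) = Num.sqrt m * (k == l)%:R.
Proof. by rewrite row_mxEr !mxE. Qed.

Lemma aug_residEl b i :
  lasso_resid aug_col aug_y b 0 (lshift p i) = y i - \sum_l X i l * b l.
Proof.
rewrite /lasso_resid /aug_y mxE row_mxEl !mxE summxE.
by congr (_ - _); apply: eq_bigr => l _; rewrite mxE aug_colEl mulrC.
Qed.

Lemma aug_residEr b k :
  lasso_resid aug_col aug_y b 0 (rshift n k) = - (Num.sqrt m * b k).
Proof.
rewrite /lasso_resid /aug_y mxE row_mxEr !mxE summxE add0r.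
rewrite (bigD1 k) //= big1 => [|l /negbTE l_neq].
  by rewrite mxE aug_colEr eqxx mulr1 addr0 mulrC.
by rewrite mxE aug_colEr eq_sym l_neq !mulr0.
Qed.

Lemma vdot_aug_resid b :
  '[lasso_resid aug_col aug_y b, lasso_resid aug_col aug_y b] =
  \sum_i (y i - \sum_l X i l * b l) ^+ 2 + m * \sum_l b l ^+ 2.
Proof.
rewrite /vdot big_split_ord mulr_sumr; congr (_ + _); apply: eq_bigr => k _.
  by rewrite aug_residEl expr2.
by rewrite aug_residEr mulrNN mulrACA -expr2 sqr_sqrtr // expr2.
Qed.

End Augmentation.

Lemma lambda_mE (R : realType) n p (X : 'M[R]_(n, p)) y alpha kstar :
  0 < alpha * n%:R -> (forall l, `|xty X y l| <= `|xty X y kstar|) ->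
  lambda_m X y alpha = `|xty X y kstar| / (alpha * n%:R).
Proof.
move=> an_gt0 kstar_max.
have normE l : `|xty X y l / (alpha * n%:R)| = `|xty X y l| / (alpha * n%:R).
  by rewrite normrM normfV (gtr0_norm an_gt0).
apply/le_anti/andP; split; last by rewrite -normE (le_bigmax _ (fun l => `|_|)).
apply: bigmax_le => [|l _]; first by rewrite divr_ge0 // ltW.
by rewrite normE ler_pM2r ?invr_gt0.
Qed.

Section ElasticNetAsLasso.
Variables (R : realType) (n p : nat) (X : 'M[R]_(n, p)) (y : 'I_n -> R).
Variables (alpha lam : R).
Hypotheses (n_gt0 : 0 < n%:R :> R) (ridge_ge0 : 0 <= (1 - alpha) * lam).

Let xa := aug_col X (n%:R * ((1 - alpha) * lam)).
Let ya := aug_y p y.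

Lemma enet_obj_lasso b : enet_obj X y lam alpha b =
  n%:R^-1 * lasso_obj xa ya (n%:R * alpha * lam) b.
Proof.
rewrite /enet_obj /lasso_obj vdot_aug_resid ?(mulr_ge0 (ltW n_gt0) ridge_ge0) //.
by field; rewrite gt_eqF.
Qed.

Lemma enet_argmin_lasso b : enet_argmin X y lam alpha b ->
  lasso_argmin xa ya (n%:R * alpha * lam) b.
Proof.
move=> b_min b'; have := b_min b'; rewrite !enet_obj_lasso.
by rewrite ler_pM2l ?invr_gt0.
Qed.

End ElasticNetAsLasso.

Section Screening.
Variables (R : realType) (n p : nat) (X : 'M[R]_(n, p)) (y : 'I_n -> R).
Variables (alpha lam lm : R) (kstar j : 'I_p).
Hypotheses (n_gt0 : 0 < n%:R :> R) (alpha_gt0 : 0 < alpha) (alpha_le1 : alpha <= 1).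
Hypotheses (lam_gt0 : 0 < lam) (lam_le_lm : lam <= lm).
Hypothesis xtx_diag : forall l, xtx X l l = n%:R.
Hypothesis kstar_max : forall l, `|xty X y l| <= `|xty X y kstar|.
Hypothesis xty_kstar : `|xty X y kstar| = n%:R * alpha * lm.
Hypothesis j_neq_kstar : j != kstar.

Let D := 1 + lam * (1 - alpha).
Let mu := n%:R * alpha * lam.
Let mu0 := n%:R * alpha * lm.
Let s := Num.sg (xty X y kstar).
Let c := mu^-1 - mu0^-1.
(* [t] minimizes ['[w, w]], the squared diameter of the EDPP ball. *)
Let t := c * alpha * lm / D.
Let xa := aug_col X (n%:R * ((1 - alpha) * lam)).
Let ya := aug_y p y.
Let w := c *: ya - (t * s) *: xa kstar.
Let K := 2 * n%:R * alpha * lam * lm.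
Let S := n%:R * sqnorm y * D - n%:R ^+ 2 * alpha ^+ 2 * lm ^+ 2.

Let lm_gt0 : 0 < lm := lt_le_trans lam_gt0 lam_le_lm.
Let ridge_ge0 : 0 <= (1 - alpha) * lam.
Proof. by rewrite mulr_ge0 ?subr_ge0 // ltW. Qed.
Let n_ridge_ge0 : 0 <= n%:R * ((1 - alpha) * lam) :=
  mulr_ge0 (ltW n_gt0) ridge_ge0.
Let D_gt0 : 0 < D.
Proof. by have := ridge_ge0; rewrite /D; lra. Qed.
Let mu_gt0 : 0 < mu. Proof. by rewrite !mulr_gt0. Qed.
Let mu0_gt0 : 0 < mu0. Proof. by rewrite !mulr_gt0. Qed.
Let s_xty : s * xty X y kstar = mu0. Proof. by rewrite -normrEsg. Qed.
Let s_sqr : s ^+ 2 = 1.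
Proof. by rewrite sqr_sg -normr_gt0 xty_kstar mu0_gt0. Qed.

Lemma edpp_projection b : enet_argmin X y lam alpha b ->
  ('[xa j, lasso_dual xa ya mu b] - xty X y j / mu0 - '[xa j, w] / 2) ^+ 2
    <= '[xa j, xa j] * '[w, w] / 4.
Proof.
move=> /(enet_argmin_lasso n_gt0 ridge_ge0) b_min.
pose th0 := mu0^-1 *: ya.
have xa_th0 l : '[xa l, th0] = xty X y l / mu0.
  by rewrite vdotZr vdot_aug_col_y mulrC.
have th0_feas l : `|'[xa l, th0]| <= 1.
  rewrite xa_th0 normrM normfV (gtr0_norm mu0_gt0) ler_pdivrMr // mul1r.
  by rewrite /mu0 -xty_kstar kstar_max.
have v_le : '[s *: xa kstar, lasso_dual xa ya mu b] <= '[s *: xa kstar, th0].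
  rewrite !vdotZl xa_th0 mulrA s_xty divff ?gt_eqF //.
  have [_ dual_le1] := lasso_dual_kkt mu_gt0 b_min kstar.
  apply: le_trans (ler_norm _) _.
  by rewrite normrM normr_sg -normr_gt0 xty_kstar mu0_gt0 mul1r.
have t_ge0 : 0 <= t.
  have c_ge0 : 0 <= c.
    by rewrite /c subr_ge0 lef_pV2 ?posrE // ler_pM2l ?mulr_gt0.
  by rewrite divr_ge0 ?(ltW D_gt0) // !mulr_ge0 // ltW.
have := vdot_diameter_ball (xa j) (lasso_dual_ball mu_gt0 b_min th0_feas v_le t_ge0).
have -> : mu^-1 *: ya - th0 - t *: (s *: xa kstar) = w.
  by apply/rowP => k; rewrite /w /c !mxE; ring.
by rewrite vdotBr xa_th0.
Qed.

Lemma edpp_center : xty X y j / mu0 + '[xa j, w] / 2 =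
  ((lm + lam) * xty X y j - (lm - lam) * (s * alpha * lm / D) * xtx X j kstar) / K.
Proof.
have jk : (j == kstar) = false by apply/negbTE.
rewrite /w vdotBr !vdotZr vdot_aug_col_y vdot_aug_col // jk mulr0 addr0.
by rewrite /t /c /mu /mu0 /K; field; rewrite !gt_eqF.
Qed.

Lemma edpp_radius : '[xa j, xa j] * '[w, w] / 4 = ((lm - lam) / K) ^+ 2 * S.
Proof.
have ww : '[w, w] = c ^+ 2 * sqnorm y - 2 * c * t * (s * xty X y kstar)
    + t ^+ 2 * s ^+ 2 * (xtx X kstar kstar + n%:R * ((1 - alpha) * lam)).
  rewrite /w !(vdotBl, vdotBr, vdotZl, vdotZr) vdot_aug_y (vdotC ya).
  by rewrite vdot_aug_col_y vdot_aug_col // eqxx mulr1; ring.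
rewrite ww s_xty s_sqr vdot_aug_col // !xtx_diag eqxx mulr1.
by rewrite /t /c /mu /mu0 /K /S /D; field; rewrite !gt_eqF.
Qed.

Theorem enet_screening b : enet_argmin X y lam alpha b ->
  `|(lm + lam) * xty X y j - (lm - lam) * (s * alpha * lm / D) * xtx X j kstar|
    < K - (lm - lam) * Num.sqrt S ->
  b j = 0.
Proof.
move=> b_min bound.
apply: (lasso_screen mu_gt0 (enet_argmin_lasso n_gt0 ridge_ge0 b_min)).
have K_gt0 : 0 < K by rewrite !mulr_gt0.
have := edpp_projection b_min; rewrite edpp_radius -addrA -opprD edpp_center.
move=> /ler_norm_sqrt; rewrite divr_ge0 ?subr_ge0 ?(ltW K_gt0) // => /(_ isT).
set E := (lm + lam) * _ - _; set rho := '[_, _] => near.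
have := lerB_dist rho (E / K); rewrite normrM normfV (gtr0_norm K_gt0).
have : `|E| / K + (lm - lam) / K * Num.sqrt S < 1.
  by rewrite mulrAC -mulrDl ltr_pdivrMr // mul1r; lra.
lra.
Qed.

End Screening.

Theorem theorem4p1 (R : realType) (n p : nat) (y : 'I_n -> R)
    (X : 'M[R]_(n, p)) (alpha lam : R) (kstar j : 'I_p) :
  \sum_(i < n) y i = 0 ->
  (forall l : 'I_p, \sum_(i < n) X i l = 0) ->
  (forall l : 'I_p, n%:R^-1 * \sum_(i < n) X i l ^+ 2 = 1) ->
  0 < alpha <= 1 ->
  (* x_* = x_kstar is (an) argmax of |x_l^T y| *)
  (forall l : 'I_p, `|xty X y l| <= `|xty X y kstar|) ->
  0 < lam <= lambda_m X y alpha ->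
  col j X != col kstar X ->
  let lm := lambda_m X y alpha in
  `| (lm + lam) * xty X y j
     - (lm - lam) * (Num.sg (xty X y kstar) * alpha * lm / (1 + lam * (1 - alpha)))
       * xtx X j kstar |
  < 2 * n%:R * alpha * lam * lm
    - (lm - lam) * Num.sqrt (n%:R * sqnorm y * (1 + lam * (1 - alpha))
                             - n%:R ^+ 2 * alpha ^+ 2 * lm ^+ 2) ->
  forall b : 'I_p -> R, enet_argmin X y lam alpha b -> b j = 0.
Proof.
move=> _ _ col_norm /andP[alpha_gt0 alpha_le1] kstar_max /andP[lam_gt0 lam_le_lm].
move=> col_neq lm bound b b_min.
have n_gt0 : 0 < n%:R :> R.
  rewrite lt0r ler0n andbT; apply: contra_eqN (col_norm j) => /eqP->.
  by rewrite invr0 mul0r eq_sym oner_eq0.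
have xtx_diag l : xtx X l l = n%:R.
  have sumsq : \sum_(i < n) X i l ^+ 2 = n%:R.
    by rewrite -[LHS](mulVKf (lt0r_neq0 n_gt0)) col_norm mulr1.
  by rewrite -sumsq; apply: eq_bigr => i _; rewrite expr2.
have xty_kstar : `|xty X y kstar| = n%:R * alpha * lm.
  by rewrite /lm (lambda_mE _ kstar_max) ?mulr_gt0 //; field; rewrite !gt_eqF.
have j_neq_kstar : j != kstar by apply: contraNneq col_neq => ->.
exact: (enet_screening n_gt0 alpha_gt0 alpha_le1 lam_gt0 lam_le_lm xtx_diag
  kstar_max xty_kstar j_neq_kstar b_min bound).
Qed.
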